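(* Let $(A,\cdot,\alpha)$ be a Hom-associative algebra, $(V,l,r,\beta)$ an $A$-bimodule and $T:V\to A$ an $\mathcal{O}$-operator associated to $(V,l,r,\beta)$. Define $u\ast v:=l(T(u))v-r(T(u))v$ for $u,v\in V$. Then $(V,\ast,\beta)$ is a Hom-preLie algebra.
   Context: A Hom-associative algebra $(A,\cdot,\alpha)$: $\cdot$ bilinear, $\alpha$ linear, $(x\cdot y)\cdot\alpha(z)=\alpha(x)\cdot(y\cdot z)$. An $A$-bimodule $(V,l,r,\beta)$: a vector space $V$, linear $\beta:V\to V$, linear maps $l,r:A\to\mathfrak{gl}(V)$ with $l(x\cdot y)\beta=l(\alpha(x))l(y)$, $r(\alpha(y))l(x)=l(\alpha(x))r(y)$, $r(\alpha(y))r(x)=r(x\cdot y)\beta$ for all $x,y\in A$. An $\mathcal{O}$-operator associated to $(V,l,r,\beta)$ is a linear $T:V\to A$ with $\alpha T=T\beta$ and $T(u)\cdot T(v)=T(l(T(u))v+r(T(v))u)$ for all $u,v\in V$. A Hom-preLie algebra $(S,\ast,\beta)$: $\ast$ bilinear, $\beta$ linear, $(u\ast v)\ast\beta(w)-\beta(u)\ast(v\ast w)=(v\ast u)\ast\beta(w)-\beta(v)\ast(u\ast w)$ for all $u,v,w$. *)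

From HB Require Import structures.
From mathcomp Require Import all_boot all_order all_algebra.
Set Implicit Arguments. Unset Strict Implicit. Unset Printing Implicit Defensive.
Import GRing.Theory.
Local Open Scope ring_scope.

Section Defs.
Variable K : fieldType.

Definition is_linear (U W : lmodType K) (f : U -> W) : Prop :=
  forall (a : K) (x y : U), f (a *: x + y) = a *: f x + f y.

Definition is_bilinear (U W X : lmodType K) (f : U -> W -> X) : Prop :=
  (forall w : W, is_linear (fun u => f u w)) /\ (forall u : U, is_linear (f u)).

Definition HomAssociative (A : lmodType K) (mul : A -> A -> A) (alpha : A -> A)
  : Prop :=
  [/\ is_bilinear mul, is_linear alpha &
      forall x y z : A, mul (mul x y) (alpha z) = mul (alpha x) (mul y z)].

Definition HomBimodule (A V : lmodType K) (mul : A -> A -> A) (alpha : A -> A)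
  (l r : A -> V -> V) (beta : V -> V) : Prop :=
  is_linear beta /\ is_bilinear l /\ is_bilinear r /\
  (forall (x y : A) (v : V), l (mul x y) (beta v) = l (alpha x) (l y v)) /\
  (forall (x y : A) (v : V), r (alpha y) (l x v) = l (alpha x) (r y v)) /\
  (forall (x y : A) (v : V), r (alpha y) (r x v) = r (mul x y) (beta v)).

Definition OOperator (A V : lmodType K) (mul : A -> A -> A) (alpha : A -> A)
  (l r : A -> V -> V) (beta : V -> V) (T : V -> A) : Prop :=
  [/\ is_linear T,
      (forall v : V, alpha (T v) = T (beta v)) &
      (forall u v : V, mul (T u) (T v) = T (l (T u) v + r (T v) u))].

Definition HomPreLie (S : lmodType K) (star : S -> S -> S) (beta : S -> S)
  : Prop :=
  [/\ is_bilinear star, is_linear beta &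
      forall u v w : S,
        star (star u v) (beta w) - star (beta u) (star v w)
        = star (star v u) (beta w) - star (beta v) (star u w)].

End Defs.

From mathcomp Require Import all_boot all_order all_algebra.
Import GRing.Theory.
Local Open Scope ring_scope.

(* Write u * v = (l - r)(T u) v.  The bimodule axioms make l - r a
   representation of the commutator algebra (A, [x, y] = x y - y x, alpha)
   on (V, beta):
     (l - r)([x, y]) beta = (l - r)(alpha x) (l - r)(y) - (l - r)(alpha y) (l - r)(x),
   the mixed terms cancelling by r(alpha y) l(x) = l(alpha x) r(y).  The
   O-operator identity gives T(u * v) - T(v * u) = [T u, T v], and together
   with alpha T = T beta this is exactly the Hom-preLie identity. *)

Set Implicit Arguments.

Section LinearMaps.
Variable K : fieldType.
Implicit Types U W X Y : lmodType K.

Lemma is_linearD U W (f : U -> W) : is_linear f -> {morph f : x y / x + y}.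
Proof. by move=> f_lin x y; have := f_lin 1 x y; rewrite !scale1r. Qed.

Lemma is_linearB U W (f : U -> W) : is_linear f -> {morph f : x y / x - y}.
Proof. by move=> f_lin x y; rewrite addrC -scaleN1r f_lin scaleN1r addrC. Qed.

Lemma is_linear_comp U W X (f : U -> W) (g : W -> X) :
  is_linear f -> is_linear g -> is_linear (g \o f).
Proof. by move=> f_lin g_lin a x y /=; rewrite f_lin g_lin. Qed.

Lemma is_linear_sub U W (f g : U -> W) :
  is_linear f -> is_linear g -> is_linear (fun x => f x - g x).
Proof.
by move=> f_lin g_lin a x y; rewrite f_lin g_lin scalerBr opprD addrACA.
Qed.

Lemma is_bilinear_sub U W X (f g : U -> W -> X) :
  is_bilinear f -> is_bilinear g -> is_bilinear (fun u w => f u w - g u w).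
Proof. by move=> [f1 f2] [g1 g2]; split=> [w | u]; exact: is_linear_sub. Qed.

Lemma is_bilinear_compl U W X Y (T : Y -> U) (f : U -> W -> X) :
  is_linear T -> is_bilinear f -> is_bilinear (fun y w => f (T y) w).
Proof.
move=> T_lin [f1 f2]; split=> [w | y]; last exact: f2.
exact: is_linear_comp T_lin (f1 w).
Qed.

End LinearMaps.

Lemma subrBBK (V : zmodType) (a b c d p q : V) :
  a - p - (q - d) - (c - q - (p - b)) = a - b - (c - d).
Proof.
rewrite !opprB !addrA [_ - q + p]addrAC [a - p + d + p]addrAC subrK.
by rewrite [_ - b + q]addrAC subrK (addrAC a).
Qed.

Lemma subr_swap (V : zmodType) (a b c d : V) : a - c = b - d -> a - b = c - d.
Proof.
by move=> h; rewrite -(subrK c a) h addrAC (addrAC b) subrr add0r addrC.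
Qed.

Section Bimodule.
Variables (K : fieldType) (A V : lmodType K).
Variables (mul : A -> A -> A) (alpha : A -> A).
Variables (l r : A -> V -> V) (beta : V -> V).
Hypothesis bimod : HomBimodule mul alpha l r beta.

Definition lsubr (a : A) (v : V) : V := l a v - r a v.

Lemma lsubr_bilinear : is_bilinear lsubr.
Proof. by case: bimod => _ [l_bilin [r_bilin _]]; exact: is_bilinear_sub. Qed.

Lemma lsubr_commutator x y v :
  lsubr (mul x y - mul y x) (beta v)
  = lsubr (alpha x) (lsubr y v) - lsubr (alpha y) (lsubr x v).
Proof.
have [_ [[_ l2] [[_ r2] [l_mul [r_l r_mul]]]]] := bimod.
rewrite (is_linearB (lsubr_bilinear.1 _)) /lsubr !l_mul -!r_mul.
by rewrite !(is_linearB (l2 _)) !(is_linearB (r2 _)) !r_l subrBBK.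
Qed.

Variable T : V -> A.
Hypothesis O_T : OOperator mul alpha l r beta T.

Lemma OOperator_commutator u v :
  T (lsubr (T u) v) - T (lsubr (T v) u) = mul (T u) (T v) - mul (T v) (T u).
Proof.
have [T_lin _ T_mul] := O_T.
rewrite !T_mul /lsubr !(is_linearB T_lin) !(is_linearD T_lin).
by rewrite opprB opprD addrACA (addrC (- T (r (T u) v))).
Qed.

Lemma OOperator_lsubr_preLie u v w :
  lsubr (T (lsubr (T u) v)) (beta w) - lsubr (T (beta u)) (lsubr (T v) w)
  = lsubr (T (lsubr (T v) u)) (beta w) - lsubr (T (beta v)) (lsubr (T u) w).
Proof.
have [_ T_beta _] := O_T; have [lsubr_lin _] := lsubr_bilinear.
apply: subr_swap; rewrite -!T_beta -(is_linearB (lsubr_lin _)).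
by rewrite OOperator_commutator lsubr_commutator.
Qed.

End Bimodule.

Theorem mainTheorem16 (K : fieldType) (A V : lmodType K)
  (mul : A -> A -> A) (alpha : A -> A) (l r : A -> V -> V) (beta : V -> V)
  (T : V -> A) :
  HomAssociative mul alpha ->
  HomBimodule mul alpha l r beta ->
  OOperator mul alpha l r beta T ->
  HomPreLie (fun u v : V => l (T u) v - r (T u) v) beta.
Proof.
move=> _ bimod O_T; have [T_lin _ _] := O_T; have [beta_lin _] := bimod.
split=> //; first exact: is_bilinear_compl (lsubr_bilinear bimod).
exact: (OOperator_lsubr_preLie bimod O_T).
Qed.
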